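(* Let $\mathcal{X}$ be a finite set of $n$ agents and $\Gamma$ a merit distribution on $\mathbb{R}^{\mathcal{X}}$. Let $\pi^{TS}_\Gamma$ be the Thompson sampling ranking distribution: draw a merit vector $v\sim\Gamma$ and rank the agents by decreasing $v_x$. Then $\pi^{TS}_\Gamma$ is $1$-fair with respect to $\Gamma$.
   Context: A ranking of $\mathcal{X}$ is a bijection $\sigma:\{1,\dots,n\}\to\mathcal{X}$ ($\sigma(k)$ is the agent in position $k$); a ranking distribution $\pi$ is a probability distribution over rankings, with marginals $P_\pi(x,k)=\sum_{\sigma:\sigma(k)=x}\pi(\sigma)$. A merit distribution $\Gamma$ is a probability distribution over $v=(v_x)_{x\in\mathcal{X}}\in\mathbb{R}^{\mathcal{X}}$ such that every $v$ in its support has pairwise distinct entries. $\mathrm{Top}_k(x;v)$ denotes the event $|\{x': v_{x'}>v_x\}|<k$. For $\rho\in[0,1]$, $\pi$ is $\rho$-fair with respect to $\Gamma$ if $\sum_{k'=1}^{k}P_\pi(x,k')\ge\rho\cdot\Pr_{v\sim\Gamma}[\mathrm{Top}_k(x;v)]$ for all agents $x$ and positions $k$. *)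

From HB Require Import structures.
From mathcomp Require Import all_boot all_order all_algebra.
From mathcomp Require Import all_classical all_reals all_analysis.
Set Implicit Arguments. Unset Strict Implicit. Unset Printing Implicit Defensive.
Import Order.TTheory GRing.Theory Num.Theory.
Local Open Scope classical_set_scope.
Local Open Scope ring_scope.

(* Agents: a finite type X with n = #|X| elements.  Positions are 'I_#|X|,
   0-based: index k : 'I_#|X| stands for position k+1 of the paper. *)

(* A ranking: a bijection from positions to agents (injective map between
   sets of equal finite cardinality). *)
Definition ranking (X : finType) := {f : {ffun 'I_#|X| -> X} | injectiveb f}.

Definition is_ranking_dist (R : realType) (X : finType) (pi : ranking X -> R) :=
  (forall s, 0 <= pi s) /\ \sum_(s : ranking X) pi s = 1.

Definition marginal (R : realType) (X : finType) (pi : ranking X -> R)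
  (x : X) (k : 'I_#|X|) : R :=
  \sum_(s : ranking X | val s k == x) pi s.

(* Top_k(x; v) for the paper's position k+1 (k 0-based):
   |{x' : v_x' > v_x}| < k+1. *)
Definition Top (R : realType) (X : finType) (k : 'I_#|X|) (x : X) (w : X -> R) :=
  (#|[set x' | (w x < w x')%R]| < k.+1)%N.

Definition distinct_entries (R : realType) (X : finType) (w : X -> R) :=
  injective w.

(* The merit distribution Gamma is represented as the law of a random merit
   vector v : T -> (X -> R) on a probability space (T, P). *)

Definition ranks_by_decreasing (R : realType) (X : finType) (w : X -> R)
  (s : ranking X) :=
  forall i j : 'I_#|X|, (i < j)%N -> w (val s j) < w (val s i).

Definition thompson (R : realType) (d : measure_display) (T : measurableType d)
  (P : probability T R) (X : finType) (v : T -> X -> R) (s : ranking X) : R :=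
  fine (P [set om | ranks_by_decreasing (v om) s]).

Definition rho_fair (R : realType) (d : measure_display) (T : measurableType d)
  (P : probability T R) (X : finType) (v : T -> X -> R)
  (rho : R) (pi : ranking X -> R) :=
  forall (x : X) (k : 'I_#|X|),
    \sum_(k' < #|X| | (k' <= k)%N) marginal pi x k'
      >= rho * fine (P [set om | Top k x (v om)]).

From HB Require Import structures.
From mathcomp Require Import all_boot all_order all_algebra.
From mathcomp Require Import all_classical all_reals all_analysis.
From mathcomp Require Import measurable_realfun.
Import Order.TTheory GRing.Theory Num.Theory.
Local Open Scope classical_set_scope.
Local Open Scope ring_scope.

(* For merits w with distinct entries exactly one ranking sorts the agents by
   decreasing merit, and it places agent x at position rank w x, the number of
   agents with larger merit; Top_k(x; w) says precisely rank w x <= k.  So the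
   events "s sorts v" partition the sample space, which makes pi^TS a
   distribution, and the marginal P(x, k') of pi^TS is Pr[rank v x = k'].
   Summing over k' <= k gives Pr[Top_k(x; v)] exactly: 1-fairness holds with
   equality. *)

Section Rank.
Context {R : realType} {X : finType}.
Implicit Types (w : X -> R) (s : ranking X).

Definition rank w x : nat := #|[set y | w x < w y]%SET|.

Lemma TopE k x w : Top k x w = (rank w x <= k)%N.
Proof.
rewrite /Top ltnS; congr (_ <= _)%N.
by apply: eq_card => y; rewrite inE; exact: asboolb.
Qed.

Lemma rank_lt_card w x : (rank w x < #|X|)%N.
Proof.
rewrite -cardsT; apply: proper_card; apply/properP.
split; first exact: finset.subsetT.
by exists x; rewrite !inE ?ltxx.
Qed.

Lemma rank_lt {w x y} : w x < w y -> (rank w y < rank w x)%N.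
Proof.
move=> wxy; apply: proper_card; apply/properP; split.
  by apply/fintype.subsetP => z; rewrite !inE; apply: lt_trans.
by exists y; rewrite !inE ?wxy ?ltxx.
Qed.

Lemma rank_inj {w} : injective w -> injective (rank w).
Proof.
move=> w_inj x y rxy; apply: w_inj.
by case: (ltgtP (w x) (w y)) => // /rank_lt; rewrite rxy ltnn.
Qed.

Lemma ranking_inj s : injective (val s).
Proof. exact/injectiveP/(valP s). Qed.

Lemma ranking_surj s x : exists i, val s i = x.
Proof.
have /codomP[i ->] := inj_card_onto (ranking_inj s) (eq_leq (esym (card_ord _))) x.
by exists i.
Qed.

Lemma rank_sorted w s i : ranks_by_decreasing w s -> rank w (val s i) = i.
Proof.
move=> s_dec; have s_inj := ranking_inj s; rewrite /rank.
pose below := [set widen_ord (ltnW (ltn_ord i)) j | j : 'I_i].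
have -> : [set y | w (val s i) < w y]%SET = val s @: below.
  apply/setP => y; have [j <-] := ranking_surj s y.
  rewrite inE mem_imset //; apply/idP/imsetP => [wij|[{}j _ ->]]; last first.
    by apply: s_dec; exact: (ltn_ord j).
  have ji : (j < i)%N.
    case: (ltngtP j i) => // [ij | eji]; last by rewrite (val_inj eji) ltxx in wij.
    by have := lt_trans wij (s_dec _ _ ij); rewrite ltxx.
  by exists (Ordinal ji); last exact: val_inj.
by rewrite card_imset // card_imset ?card_ord // => j j' [] /ord_inj.
Qed.

Lemma rank_sortedE {w s} x (k : 'I_#|X|) :
  ranks_by_decreasing w s -> (rank w x == k) = (val s k == x).
Proof.
move=> s_dec; have [i <-] := ranking_surj s x.
by rewrite rank_sorted // (inj_eq (ranking_inj s)) eq_sym.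
Qed.

Lemma sorted_ranking_uniq {w s s'} : injective w ->
  ranks_by_decreasing w s -> ranks_by_decreasing w s' -> s = s'.
Proof.
move=> w_inj s_dec s'_dec; apply/val_inj/ffunP => i.
by apply: (rank_inj w_inj); rewrite !rank_sorted.
Qed.

Lemma sorted_ranking_exists {w} : injective w -> exists s, ranks_by_decreasing w s.
Proof.
move=> w_inj; pose r x : 'I_#|X| := Ordinal (rank_lt_card w x).
have r_inj : injective r by move=> x y [] /(rank_inj w_inj).
have [g rg gr] : bijective r by apply: inj_card_bij r_inj _; rewrite card_ord.
have g_inj : injective g := can_inj gr.
have rank_g i : rank w (g i) = i by rewrite -[RHS](congr1 val (gr i)).
have g_ranking : injectiveb [ffun i => g i].
  by apply/injectiveP => i j; rewrite !ffunE => /g_inj.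
exists (exist _ [ffun i => g i] g_ranking) => i j ij /=; rewrite !ffunE.
case: (ltgtP (w (g j)) (w (g i))) => // [/rank_lt | /w_inj/g_inj ji].
  by rewrite !rank_g ltnNge (ltnW ij).
by rewrite ji ltnn in ij.
Qed.

End Rank.

Lemma measure_fintype_bigcup {d} {T : measurableType d} {R : realType}
    (mu : {measure set T -> \bar R}) {I : finType} (A : pred I) (F : I -> set T) :
  (forall i, measurable (F i)) -> trivIset setT F ->
  mu (\bigcup_(i in [set` A]) F i) = (\sum_(i | A i) mu (F i))%E.
Proof.
move=> mF tF; rewrite measure_fin_bigcup //; last exact: sub_trivIset tF.
by apply/esym/bigfs => [|i _]; rewrite ?index_enum_uniq ?mem_index_enum.
Qed.

Section ThompsonSampling.
Variables (R : realType) (d : measure_display) (T : measurableType d).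
Variables (P : probability T R) (X : finType) (v : T -> X -> R).
Hypothesis v_meas : forall x, measurable_fun setT (fun om => v om x).
Hypothesis v_distinct : forall om, distinct_entries (v om).

Let sorts (s : ranking X) := [set om | ranks_by_decreasing (v om) s].

Lemma measurable_sorts s : measurable (sorts s).
Proof.
have -> : sorts s = \bigcap_(ij in [set ij : 'I_#|X| * 'I_#|X| | (ij.1 < ij.2)%N])
                      [set om | v om (val s ij.2) < v om (val s ij.1)].
  apply/seteqP; split=> [om s_dec [i j] /= | om s_dec i j ij]; first exact: s_dec.
  exact: (s_dec (i, j)).
apply: fin_bigcap_measurable => [|[i j] _]; first exact: finite_finset.
have := measurable_fun_ltr (v_meas (val s j)) (v_meas (val s i)) measurableT.
(* every subset of bool is measurable *)
by move/(_ [set true] I); rewrite setTI.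
Qed.

Lemma trivIset_sorts : trivIset setT sorts.
Proof.
move=> s s' _ _ [om [s_dec s'_dec]].
exact: sorted_ranking_uniq (v_distinct om) s_dec s'_dec.
Qed.

Lemma thompsonE s : (thompson P v s)%:E = P (sorts s).
Proof. by rewrite fineK // fin_num_measure //; exact: measurable_sorts. Qed.

Lemma rank_eventE x (k : 'I_#|X|) :
  [set om | rank (v om) x = k] =
  \bigcup_(s in [set` fun s : ranking X => val s k == x]) sorts s.
Proof.
apply/seteqP; split=> om /=.
  have [s s_dec] := sorted_ranking_exists (v_distinct om).
  by move/eqP; rewrite (rank_sortedE _ _ s_dec) => skx; exists s.
by case=> s /= skx s_dec; apply/eqP; rewrite (rank_sortedE _ _ s_dec).
Qed.

Lemma measurable_rank_event x (k : 'I_#|X|) :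
  measurable [set om | rank (v om) x = k].
Proof.
rewrite rank_eventE; apply: fin_bigcup_measurable => [|s _].
- exact: finite_finset.
- exact: measurable_sorts.
Qed.

Lemma marginal_thompsonE x k :
  (marginal (thompson P v) x k)%:E = P [set om | rank (v om) x = k].
Proof.
rewrite rank_eventE measure_fintype_bigcup; last 2 first.
- exact: measurable_sorts.
- exact: trivIset_sorts.
by rewrite -sumEFin; apply: eq_bigr => s _; rewrite thompsonE.
Qed.

Lemma thompson_ranking_dist : is_ranking_dist (thompson P v).
Proof.
split=> [s|]; first exact: fine_ge0.
apply: EFin_inj; rewrite -sumEFin (eq_bigr _ (fun s _ => thompsonE s)).
rewrite -(measure_fintype_bigcup P xpredT); last 2 first.
- exact: measurable_sorts.
- exact: trivIset_sorts.
rewrite -(probability_setT P); congr (P _); apply/seteqP; split=> // om _.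
by have [s s_dec] := sorted_ranking_exists (v_distinct om); exists s.
Qed.

Lemma sum_marginal_thompson x (k : 'I_#|X|) :
  \sum_(k' < #|X| | (k' <= k)%N) marginal (thompson P v) x k' =
  fine (P [set om | Top k x (v om)]).
Proof.
have -> : [set om | Top k x (v om)] =
    \bigcup_(k' in [set` fun k' : 'I_#|X| => (k' <= k)%N])
      [set om | rank (v om) x = k'].
  apply/seteqP; split=> om /=; rewrite TopE; last by case=> k' /= k'k ->.
  by move=> rk; exists (Ordinal (rank_lt_card (v om) x)).
rewrite measure_fintype_bigcup; last 2 first.
- exact: measurable_rank_event.
- by move=> k1 k2 _ _ [om [/= r1 r2]]; apply: ord_inj; rewrite -r1 -r2.
by rewrite (eq_bigr _ (fun k' _ => esym (marginal_thompsonE x k'))) sumEFin.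
Qed.

End ThompsonSampling.

Theorem proposition3 (R : realType) (d : measure_display) (T : measurableType d)
  (P : probability T R) (X : finType) (v : T -> X -> R)
  (v_meas : forall x : X, measurable_fun setT (fun om => v om x))
  (v_distinct : forall om : T, distinct_entries (v om)) :
  is_ranking_dist (thompson P v) /\ rho_fair P v 1 (thompson P v).
Proof.
split; first exact: thompson_ranking_dist.
by move=> x k; rewrite mul1r sum_marginal_thompson.
Qed.
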